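(* Let $g\colon\Sigma_0\to\Sigma_1$ be a strict morphism of connected labeled graphs that induces a surjection on fundamental groups. Suppose that for some $b\in\mathcal B$ the number of edges of $\Sigma_1$ labeled $b^{\pm1}$ is less than the number of edges of $\Sigma_0$ labeled $b^{\pm1}$. Then there are an immersed edge path $\sigma\colon I\to\Sigma_0$, given by $e_0e_1\cdots e_m$, a labeled tree $T$, and strict morphisms $g'\colon I\to T$ and $T\to\Sigma_1$ such that $g\circ\sigma$ equals the composite $I\to T\to\Sigma_1$, $e_0$ and $e_m^{-1}$ carry the same label $b'\in\{b,b^{-1}\}$, no $e_i$ with $0<i<m$ is labeled $b^{\pm1}$, and $g'$ maps the first edge and the inverse of the last edge of $I$ to the same edge of $T$.
   Context: Labeled graphs have oriented edges labeled in $\mathcal B^{\pm1}$ ($\mathcal B$ a finite set), with $e^{-1}$ carrying the inverse label. A map of labeled graphs is a morphism if it preserves labels and orientations and its lift to universal covers is a simplicial map of trees; it is strict if no edge is mapped to a point. An edge path is a strict morphism from an oriented subdivided compact interval $I$, identified with its sequence of oriented edges $e_0\cdots e_m$; it is immersed if no $e_i=e_{i-1}^{-1}$. *)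

From Stdlib Require Import Relations.Relation_Operators.
From mathcomp Require Import all_boot.

Set Implicit Arguments.
Unset Strict Implicit.
Unset Printing Implicit Defensive.

(* A (finite) labeled graph: vertices, oriented edges with a fixed-point-free
   involution e |-> e^{-1}, origin map, and labels in B^{+-1}, encoded as
   B * bool (true = b, false = b^{-1}); e^{-1} carries the inverse label. *)
Record lgraph (B : finType) := LGraph {
  vert : finType;
  edge : finType;
  src : edge -> vert;
  einv : edge -> edge;
  lab : edge -> B * bool;
  einvK : involutive einv;
  einv_neq : forall e, einv e != e;
  lab_einv : forall e, lab (einv e) = ((lab e).1, ~~ (lab e).2)
}.

Definition tgt (B : finType) (G : lgraph B) (e : edge G) : vert G := src (einv e).

Record smorph (B : finType) (G H : lgraph B) := SMorph {
  mv : vert G -> vert H;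
  me : edge G -> edge H;
  me_einv : forall e, me (einv e) = einv (me e);
  me_src : forall e, src (me e) = mv (src e);
  me_lab : forall e, lab (me e) = lab e
}.

Fixpoint is_path (B : finType) (G : lgraph B) (v : vert G) (p : seq (edge G))
    (w : vert G) : bool :=
  match p with
  | [::] => v == w
  | e :: p' => (src e == v) && is_path (tgt e) p' w
  end.

Definition immersed (B : finType) (G : lgraph B) (p : seq (edge G)) : bool :=
  sorted (fun e f => f != einv e) p.

Definition pend (B : finType) (G : lgraph B) (v : vert G) (p : seq (edge G)) :=
  last v (map (@tgt B G) p).

Inductive bt_step (B : finType) (G : lgraph B) (v : vert G) :
    seq (edge G) -> seq (edge G) -> Prop :=
  BtStep (a c : seq (edge G)) (e : edge G) of src e = pend v a :
    bt_step v (a ++ c) (a ++ e :: einv e :: c).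

Definition homotopic (B : finType) (G : lgraph B) (v : vert G) :=
  clos_refl_sym_trans _ (bt_step v).

Definition connected (B : finType) (G : lgraph B) : Prop :=
  forall u w : vert G, exists p, is_path u p w.

Definition pi1_surj (B : finType) (G H : lgraph B) (g : smorph G H) (v0 : vert G) :=
  forall p, is_path (mv g v0) p (mv g v0) ->
    exists q, is_path v0 q v0 /\ homotopic (mv g v0) (map (me g) q) p.

Definition is_tree (B : finType) (T : lgraph B) : Prop :=
  connected T /\ forall (v : vert T) (p : seq (edge T)), is_path v p v -> immersed p -> p = [::].

(* number of oriented edges labeled b (= number of geometric edges labeled b^{+-1}) *)
Definition nb_edges (B : finType) (G : lgraph B) (b : B) : nat :=
  #|[pred e : edge G | lab e == (b, true)]|.

From mathcomp Require Import all_boot zify.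

(* Counting gives two distinct edges e, e' labelled b with the same image. Since g is
   surjective on fundamental groups, some path from the origin of e to that of e' has a
   null-homotopic image; freely reduced, it is an immersed path R whose image still reduces
   to the empty word. Either R or the detour e^-1 R e' is then an immersed path containing a
   b-edge whose image reduces to the empty word. Every letter of such a word cancels against
   a partner, and an innermost cancelling pair x ... y of b-edges gives sigma = x beta y. The
   image of sigma is a null-homotopic loop, which lifts to the tree of reduced prefixes of
   that loop; this tree immerses in S1, so the lift begins with the inverse of its last edge. *)

Set Implicit Arguments.
Unset Strict Implicit.
Unset Printing Implicit Defensive.

Lemma pigeonhole_in (A C : finType) (f : A -> C) (D : {pred A}) (D' : {pred C}) :
  {homo f : x / x \in D >-> x \in D'} -> #|D'| < #|D| ->
  exists x y, [/\ x \in D, y \in D, x != y & f x = f y].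
Proof.
move=> fD ltD'D; have [/dinjectiveP/card_in_image card_img|] := boolP (dinjectiveb f D).
  move: ltD'D; rewrite -card_img ltnNge => /negP [].
  by apply/subset_leq_card/subsetP => _ /imageP [x Dx ->]; apply: fD.
case/dinjectivePn => x Dx [y /andP [neq_yx Dy] eq_f].
by exists x, y; rewrite eq_sym.
Qed.

Lemma cat_eq_cat_cons (T : Type) (a c r1 r2 : seq T) z : a ++ c = r1 ++ z :: r2 ->
  (exists a2, a = r1 ++ z :: a2 /\ r2 = a2 ++ c) \/
  (exists c1, c = c1 ++ z :: r2 /\ r1 = a ++ c1).
Proof.
elim: a r1 => [|x a IH] r1 /=; first by move=> ->; right; exists r1.
case: r1 => [|y r1] /= [-> eq_rest]; first by left; exists a.
case: (IH _ eq_rest) => [[a2 [-> ->]]|[c1 [-> ->]]]; first by left; exists a2.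
by right; exists c1.
Qed.

Lemma not_sorted_split (T : Type) (r : rel T) w : ~~ sorted r w ->
  exists a x y c, w = a ++ x :: y :: c /\ ~~ r x y.
Proof.
elim: w => [|x w IH] //; case: w IH => [|y w] // IH /=.
case rxy: (r x y); last by exists [::], x, y, w; rewrite rxy.
move=> /= not_sorted; case: (IH not_sorted) => a [x' [y' [c [-> nr]]]].
by exists (x :: a), x', y', c.
Qed.

Lemma mem_nth_interior (T : eqType) (d x y : T) s i :
  0 < i < (size (x :: s ++ [:: y])).-1 -> nth d (x :: s ++ [:: y]) i \in s.
Proof.
case: i => [|i] // /andP [_]; rewrite /= size_cat addn1 ltnS => lt_i.
by rewrite nth_cat lt_i mem_nth.
Qed.

Section FreeReduction.
Variables (T : eqType) (inv : T -> T).
Hypothesis invK : involutive inv.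

Definition reduced (w : seq T) := sorted (fun x y => y != inv x) w.

(* Free reduction reads a word letter by letter onto a stack holding the
   reduced word read so far, its last letter on top. *)
Definition push (s : seq T) (x : T) : seq T :=
  if s is y :: s' then (if y == inv x then s' else x :: s) else [:: x].

Definition reduce_onto (s w : seq T) := foldl push s w.

Definition reduce (w : seq T) := rev (reduce_onto [::] w).

Definition winv (w : seq T) := rev (map inv w).

Lemma reduced_rev s : reduced (rev s) = sorted (fun x y => x != inv y) s.
Proof. exact: rev_sorted. Qed.

Lemma push_reduced s x : reduced (rev s) -> reduced (rev (push s x)).
Proof.
rewrite !reduced_rev; case: s => [|y s] //= red_s.
case: ifP => [_|neq_y]; first exact: path_sorted red_s.
by rewrite /= red_s andbT -(inv_eq invK) eq_sym neq_y.
Qed.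

Lemma reduce_onto_reduced s w :
  reduced (rev s) -> reduced (rev (reduce_onto s w)).
Proof. by elim: w s => [|x w IH] s //= /(push_reduced x); apply: IH. Qed.

Lemma reduced_reduce w : reduced (reduce w).
Proof. exact: reduce_onto_reduced. Qed.

Lemma pushK s x : reduced (rev s) -> push (push s x) (inv x) = s.
Proof.
rewrite reduced_rev; case: s => [|y s] /=; first by rewrite invK eqxx.
case: ifP => [/eqP -> | _] red_s; last by rewrite /= invK eqxx.
case: s red_s => [|z s] //= /andP [neq_z _].
rewrite invK; suff /negbTE -> : z != x by [].
by apply: contraNneq neq_z => ->.
Qed.

Lemma reduce_onto_cat s u v :
  reduce_onto s (u ++ v) = reduce_onto (reduce_onto s u) v.
Proof. exact: foldl_cat. Qed.

Lemma reduce_onto_rcons s w x :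
  reduce_onto s (rcons w x) = push (reduce_onto s w) x.
Proof. exact: foldl_rcons. Qed.

Lemma reduce_onto_reducedE s w :
  reduced (rev s ++ w) -> reduce_onto s w = rev w ++ s.
Proof.
elim: w s => [|x w IH] s red_sw /=; first by rewrite cats0 in red_sw.
have -> : push s x = x :: s.
  case: s red_sw => [|y s] //=; rewrite rev_cons cat_rcons /reduced sorted_cat_cons.
  move=> /andP [_ /= /andP [neq_x _]].
  by rewrite -(inv_eq invK) eq_sym (negbTE neq_x).
by rewrite IH ?rev_cons ?cat_rcons.
Qed.

Lemma reduce_id w : reduced w -> reduce w = w.
Proof. by move=> red_w; rewrite /reduce reduce_onto_reducedE ?cats0 ?revK. Qed.

Lemma reduce_onto_reduce s w :
  reduced (rev s) -> reduce_onto s (reduce w) = reduce_onto s w.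
Proof.
move=> red_s; elim/last_ind: w => [|w x IH] //.
rewrite [RHS]reduce_onto_rcons -IH /reduce reduce_onto_rcons.
case: (reduce_onto [::] w) => [|y r] //=.
case: eqVneq => [->|_]; last by rewrite [rev (x :: _)]rev_cons reduce_onto_rcons.
rewrite rev_cons reduce_onto_rcons.
have := pushK (inv x) (reduce_onto_reduced (rev r) red_s).
by rewrite invK => ->.
Qed.

Lemma reduce_cat u v : reduce (u ++ v) = reduce (reduce u ++ reduce v).
Proof.
rewrite /reduce !reduce_onto_cat reduce_onto_reduce // reduce_onto_reduce //.
exact: reduce_onto_reduced.
Qed.

Lemma reduce_mid u m m' v :
  reduce m = reduce m' -> reduce (u ++ m ++ v) = reduce (u ++ m' ++ v).
Proof.
by move=> eq_m; rewrite reduce_cat [RHS]reduce_cat (reduce_cat m) (reduce_cat m') eq_m.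
Qed.

Lemma reduce_cancel a x c : reduce (a ++ x :: inv x :: c) = reduce (a ++ c).
Proof.
by rewrite -[x :: _]/([:: x; inv x] ++ c) (@reduce_mid _ _ [::]) //= /reduce /= invK eqxx.
Qed.

Lemma winvK : involutive winv.
Proof. by move=> w; rewrite /winv map_rev revK -map_comp (eq_map invK) map_id. Qed.

Lemma reduce_cat_winv w : reduce (w ++ winv w) = [::].
Proof.
suff onto_s s : reduced (rev s) -> reduce_onto s (w ++ winv w) = s by rewrite /reduce onto_s.
elim: w s => [|x w IH] s red_s //=.
rewrite /winv /= rev_cons -cats1 -/(winv w) catA reduce_onto_cat /=.
by rewrite IH ?pushK ?push_reduced.
Qed.

Lemma reduce_winv_cat w : reduce (winv w ++ w) = [::].
Proof. by rewrite -{2}(winvK w) reduce_cat_winv. Qed.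

Lemma push_cases s x : push s x = x :: s \/ s = inv x :: push s x.
Proof. by case: s => [|y s] /=; [left | case: eqVneq => [->|_]; [right | left]]. Qed.

Lemma eq_pop_push s x : (s == inv x :: push s x) = (push s x != x :: s).
Proof.
have neq_size (t t' : seq T) : size t != size t' -> (t == t') = false.
  by apply: contraNF => /eqP ->.
case: (push_cases s x) => [e_push | e_pop]; first by rewrite e_push eqxx neq_size //= ltn_eqF.
by rewrite -e_pop eqxx; apply/esym/negbT/neq_size; rewrite {2}e_pop /= eq_sym gtn_eqF.
Qed.

Section Letters.
Variables (X : Type) (phi : X -> T).

Lemma reduce_map_cancel a x y c : phi y = inv (phi x) ->
  reduce (map phi (a ++ x :: y :: c)) = reduce (map phi (a ++ c)).
Proof. by move=> phi_y; rewrite !map_cat /= phi_y reduce_cancel. Qed.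

Lemma not_reduced_split w : ~~ reduced (map phi w) ->
  exists a x y c, w = a ++ x :: y :: c /\ phi y = inv (phi x).
Proof.
rewrite /reduced sorted_map => /not_sorted_split [a [x [y [c [-> /negPn /eqP]]]]].
by exists a, x, y, c.
Qed.

Lemma reduce_nil_partner w p y r :
  reduce (map phi w) = [::] -> w = p ++ y :: r ->
  (exists p1 z p2, [/\ p = p1 ++ z :: p2, phi z = inv (phi y) & reduce (map phi p2) = [::]]) \/
  (exists r1 z r2, [/\ r = r1 ++ z :: r2, phi z = inv (phi y) & reduce (map phi r1) = [::]]).
Proof.
move: {2}(size w) (leqnn (size w)) => n.
elim: n w p y r => [|n IH] w p y r le_w red_w def_w.
  by move: le_w; rewrite def_w size_cat addnS.
have /not_reduced_split [a [x [x' [c [def_w' phi_x']]]]] : ~~ reduced (map phi w).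
  by apply: contraTN isT => /reduce_id; rewrite red_w def_w map_cat; case: (map phi p).
have le_ac : size (a ++ c) <= n.
  by move: le_w; rewrite def_w' !size_cat /= !addnS ltnS => /ltnW.
have red_ac : reduce (map phi (a ++ c)) = [::] by rewrite -(reduce_map_cancel a c phi_x') -def_w'.
rewrite def_w' in def_w; case: (cat_eq_cat_cons def_w) => [[a2 [def_a def_r]]|[c1 [def_c def_p]]].
  subst a r; case: (IH _ p y (a2 ++ c) le_ac red_ac); first by rewrite -catA.
    by left.
  case=> r1 [z [r2 [def_r phi_z red_r1]]]; right.
  case: (cat_eq_cat_cons def_r) => [[a3 [-> _]]|[c2 [-> def_r1]]].
    by exists r1, z, (a3 ++ x :: x' :: c); rewrite -catA.
  subst r1; exists (a2 ++ x :: x' :: c2), z, r2; rewrite -catA; split=> //.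
  by rewrite reduce_map_cancel.
case: c1 def_c def_p => [|x1 [|x2 c1]] /= def_c def_p.
- case: def_c => <- <-; right.
  by exists [::], x', c.
- case: def_c => def_x1 def_y def_r; subst x1 y r; left.
  by exists a, x, [::]; rewrite def_p phi_x' invK.
- case: def_c => def_x1 def_x2 def_c; subst x1 x2 c p.
  case: (IH _ (a ++ c1) y r le_ac red_ac); [by rewrite catA | | by right].
  case=> p1 [z [p2 [def_p phi_z red_p2]]]; left.
  case: (cat_eq_cat_cons def_p) => [[a3 [-> def_p2]]|[c2 [-> _]]].
    subst p2; exists p1, z, (a3 ++ x :: x' :: c1); rewrite -catA; split=> //.
    by rewrite reduce_map_cancel.
  by exists (a ++ x :: x' :: c2), z, p2; rewrite -catA.
Qed.

End Letters.

End FreeReduction.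

Section ReduceMap.
Variables (T T' : eqType) (inv : T -> T) (inv' : T' -> T') (phi : T -> T').
Hypotheses (inv'K : involutive inv') (phi_inv : forall x, phi (inv x) = inv' (phi x)).

Lemma reduce_map_reduce w :
  reduce inv' (map phi (reduce inv w)) = reduce inv' (map phi w).
Proof.
suff onto_s s : reduce inv' (map phi (rev (reduce_onto inv s w))) =
                reduce inv' (map phi (rev s ++ w)) by apply: onto_s.
elim: w s => [|x w IH] s /=; first by rewrite cats0.
rewrite IH; case: s => [|y s] //=; case: eqVneq => [->|_].
  rewrite rev_cons -cats1 -catA !map_cat /= phi_inv -{2}[phi x]inv'K.
  by rewrite reduce_cancel.
by rewrite [rev (x :: _)]rev_cons cat_rcons.
Qed.

End ReduceMap.

Section Paths.
Variables (B : finType) (G : lgraph B).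
Implicit Types (u v w : vert G) (e : edge G) (p q : seq (edge G)).

Local Notation inv := (@einv B G).
Local Notation invK := (@einvK B G).

Lemma tgt_einv e : tgt (einv e) = src e.
Proof. by rewrite /tgt invK. Qed.

Lemma is_path_cat u w p q :
  is_path u (p ++ q) w = is_path u p (pend u p) && is_path (pend u p) q w.
Proof. by elim: p u => [|e p IH] u /=; rewrite ?eqxx // IH andbA. Qed.

Lemma is_path_pend u w p : is_path u p w -> w = pend u p.
Proof. by elim: p u => [|e p IH] u /=; [move/eqP | case/andP => _ /IH]. Qed.

Lemma cat_is_path u v w p q :
  is_path u p v -> is_path v q w -> is_path u (p ++ q) w.
Proof. by move=> path_p; rewrite is_path_cat -(is_path_pend path_p) path_p. Qed.

Lemma is_path_rcons u w p e :
  is_path u (rcons p e) w = is_path u p (src e) && (tgt e == w).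
Proof. by elim: p u => [|e' p IH] u /=; rewrite ?IH ?andbA // eq_sym. Qed.

Lemma is_path_infix u w a p c :
  is_path u (a ++ p ++ c) w -> exists x y, is_path x p y.
Proof. by rewrite !is_path_cat => /and3P [_ path_p _]; exists (pend u a), (pend (pend u a) p). Qed.

Lemma is_path_winv u w p : is_path u p w -> is_path w (winv inv p) u.
Proof.
elim: p u => [|e p IH] u /=; first by move/eqP ->.
case/andP => /eqP src_e /IH path_p.
by rewrite /winv /= rev_cons -/(winv inv p) is_path_rcons path_p tgt_einv src_e /=.
Qed.

Lemma is_path_reduce u w p : is_path u p w -> is_path u (reduce inv p) w.
Proof.
suff onto_s x s : is_path u (rev s) x -> is_path x p w ->
  is_path u (rev (reduce_onto inv s p)) w by apply: onto_s; rewrite /= eqxx.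
elim: p s x => [|d p IH] s x /=; first by move=> path_s /eqP <-.
move=> path_s /andP [/eqP src_d path_p]; apply: IH path_p.
case: s path_s => [|y s] /=; first by move/eqP ->; rewrite src_d !eqxx.
case: eqVneq => [-> | _]; rewrite rev_cons is_path_rcons.
  by case/andP.
move=> path_ys; rewrite [rev (d :: _)]rev_cons is_path_rcons.
by rewrite rev_cons is_path_rcons src_d path_ys eqxx.
Qed.

Lemma reduce_homotopic v p q : homotopic v p q -> reduce inv p = reduce inv q.
Proof.
elim=> [_ _ [a c e _] | // | {}p {}q _ -> // | {}p {}q r _ -> _ -> //].
exact/esym/reduce_cancel/invK.
Qed.

End Paths.

Section Morphisms.
Variables (B : finType) (G H : lgraph B) (g : smorph G H).

Lemma tgt_me e : tgt (me g e) = mv g (tgt e).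
Proof. by rewrite /tgt -me_einv me_src. Qed.

Lemma is_path_map u w p : is_path u p w -> is_path (mv g u) (map (me g) p) (mv g w).
Proof.
elim: p u => [|e p IH] u /=; first by move/eqP ->.
by case/andP => /eqP src_e /IH; rewrite me_src src_e eqxx tgt_me.
Qed.

Lemma map_lab_me p : map (@lab B H) (map (me g) p) = map (@lab B G) p.
Proof. by rewrite -map_comp; apply: eq_map => e; apply: me_lab. Qed.

End Morphisms.

Definition immersion (B : finType) (T S : lgraph B) (h : smorph T S) :=
  forall e e' : edge T, src e = src e' -> me h e = me h e' -> e = e'.

Lemma immersion_fold (B : finType) (T S : lgraph B) (h : smorph T S) r e f :
  immersion h -> is_path r (e :: f) r -> me h (last e f) = einv (me h e) ->
  e = einv (last e f).
Proof.
move=> imm_h path_ef eq_last; apply: imm_h; last by rewrite me_einv eq_last einvK.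
move: path_ef (is_path_pend path_ef) => /= /andP [/eqP -> _].
by rewrite /pend /= last_map => ->.
Qed.

Section ReducedPrefixTree.
Variables (B : finType) (S : lgraph B) (x0 y0 : vert S) (c : seq (edge S)).
Hypotheses (c_path : is_path x0 c y0) (c_null : reduce (@einv B S) c = [::]).

Local Notation inv := (@einv B S).
Local Notation invK := (@einvK B S).
Local Notation stack_of u := (reduce_onto inv [::] u).

Definition prefix_stacks := [seq stack_of (take t c) | t <- iota 0 (size c).+1].

Definition prefix_vert : finType := seq_sub prefix_stacks.

Definition stack_end (s : seq (edge S)) := pend x0 (rev s).

Lemma mem_prefix_stacks u w : c = u ++ w -> stack_of u \in prefix_stacks.
Proof.
move=> def_c; apply/mapP; exists (size u); last by rewrite def_c take_size_cat.
by rewrite mem_iota add0n ltnS def_c size_cat leq_addr.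
Qed.

Lemma prefix_stacksP s :
  s \in prefix_stacks -> exists u w, c = u ++ w /\ s = stack_of u.
Proof. by case/mapP => t _ ->; exists (take t c), (drop t c); rewrite cat_take_drop. Qed.

Lemma prefix_path u w : c = u ++ w -> is_path x0 u (pend x0 u).
Proof. by move=> def_c; move: c_path; rewrite def_c is_path_cat => /andP []. Qed.

Lemma stack_end_of u w : c = u ++ w -> stack_end (stack_of u) = pend x0 u.
Proof. by move=> /prefix_path /is_path_reduce /is_path_pend ->. Qed.

Lemma stack_end_cons d s : stack_end (d :: s) = tgt d.
Proof. by rewrite /stack_end rev_cons /pend map_rcons last_rcons. Qed.

Lemma prefix_stack_path s : s \in prefix_stacks -> is_path x0 (rev s) (stack_end s).
Proof.
case/prefix_stacksP => u [w [def_c ->]].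
by rewrite (stack_end_of def_c); apply/is_path_reduce/(prefix_path def_c).
Qed.

Lemma prefix_stack_reduced s : s \in prefix_stacks -> reduced inv (rev s).
Proof. by case/prefix_stacksP => u [w [_ ->]]; apply: (reduced_reduce invK). Qed.

Definition prefix_edge (p : prefix_vert * edge S) :=
  (push inv (ssval p.1) p.2 \in prefix_stacks) && (src p.2 == stack_end (ssval p.1)).

Definition prefix_edges : finType := {p : prefix_vert * edge S | prefix_edge p}.

Definition edge_tgt (e : prefix_edges) : prefix_vert := SeqSub (andP (valP e)).1.

Lemma prefix_edge_einv (e : prefix_edges) : prefix_edge (edge_tgt e, inv (val e).2).
Proof.
case: e => [[v d] e_vd]; case/andP: (e_vd) => _ /eqP src_d; rewrite /prefix_edge /=.
have red_v := prefix_stack_reduced (ssvalP v).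
rewrite (pushK invK) // ssvalP /=; apply/eqP.
case: (push_cases inv (ssval v) d) => [-> | e_pop]; first by rewrite stack_end_cons.
move: (prefix_stack_path (ssvalP v)); rewrite {1}e_pop rev_cons is_path_rcons.
by case/andP => /is_path_pend.
Qed.

Definition prefix_einv (e : prefix_edges) : prefix_edges :=
  exist _ (edge_tgt e, inv (val e).2) (prefix_edge_einv e).

Lemma prefix_einvK : involutive prefix_einv.
Proof.
move=> [[v d] e_vd]; apply: val_inj; rewrite /= einvK; congr pair.
by apply: val_inj; rewrite /= (pushK invK) //; apply: prefix_stack_reduced (ssvalP v).
Qed.

Lemma prefix_einv_neq e : prefix_einv e != e.
Proof. by apply: contra_neq (einv_neq (val e).2) => /(congr1 (fun e => (val e).2)). Qed.

Definition prefix_lab (e : prefix_edges) := lab (val e).2.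

Lemma prefix_lab_einv e :
  prefix_lab (prefix_einv e) = ((prefix_lab e).1, ~~ (prefix_lab e).2).
Proof. exact: lab_einv. Qed.

Definition prefix_tree : lgraph B := @LGraph B prefix_vert prefix_edges
  (fun e => (val e).1) prefix_einv prefix_lab prefix_einvK prefix_einv_neq prefix_lab_einv.

Lemma prefix_map_src (e : edge prefix_tree) : src (val e).2 = stack_end (ssval (val e).1).
Proof. by case/andP: (valP e) => _ /eqP. Qed.

Definition prefix_map : smorph prefix_tree S := @SMorph B prefix_tree S
  (fun v => stack_end (ssval v)) (fun e => (val e).2) (fun e => erefl) prefix_map_src
  (fun e => erefl).

Lemma prefix_map_immersion : immersion prefix_map.
Proof.
move=> e e' /= eq_src eq_me; apply: val_inj.
by rewrite [val e]surjective_pairing [val e']surjective_pairing eq_src eq_me.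
Qed.

Local Notation tinv := (@einv B prefix_tree).

Definition height (v : vert prefix_tree) := size (ssval v).

Definition up_edge (e : edge prefix_tree) :=
  push inv (ssval (src e)) (me prefix_map e) == me prefix_map e :: ssval (src e).

Lemma down_edge_pop (e : edge prefix_tree) :
  ~~ up_edge e -> ssval (src e) = inv (me prefix_map e) :: ssval (tgt e).
Proof. by rewrite -eq_pop_push => /eqP. Qed.

Lemma up_edge_height e : up_edge e -> height (tgt e) = (height (src e)).+1.
Proof. by move/eqP; rewrite /height /= => ->. Qed.

Lemma down_edge_height e : ~~ up_edge e -> height (src e) = (height (tgt e)).+1.
Proof. by rewrite /height => /down_edge_pop ->. Qed.

Lemma up_edge_einv e : up_edge (einv e) = ~~ up_edge e.
Proof.
case: e => [[v d] e_vd]; rewrite /up_edge /= (pushK invK); last first.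
  exact: prefix_stack_reduced (ssvalP v).
exact: eq_pop_push.
Qed.

Lemma down_edge_uniq e e' :
  ~~ up_edge e -> ~~ up_edge e' -> src e = src e' -> e = e'.
Proof.
move=> /down_edge_pop pop_e /down_edge_pop pop_e' eq_src; apply: prefix_map_immersion => //.
by apply: (can_inj invK); move: pop_e'; rewrite -eq_src pop_e => -[].
Qed.

Lemma immersed_path_split u w p : is_path u p w -> immersed p ->
  exists pd pu, [/\ p = pd ++ pu, all (predC up_edge) pd & all up_edge pu].
Proof.
elim: p u => [|e p IH] u /=; first by exists [::], [::].
case/andP=> _ path_p imm_ep.
case: (IH _ path_p (path_sorted imm_ep)) => pd [pu [def_p down_pd up_pu]]; subst p.
case up_e: (up_edge e); last by exists (e :: pd), pu; rewrite /= up_e.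
case: pd {IH} down_pd imm_ep path_p => [|e' pd] down_pd imm_ep path_p.
  by exists [::], (e :: pu); rewrite /= up_e.
move: down_pd path_p => /= /andP [down_e' _] /andP [/eqP src_e' _].
have down_inv : ~~ up_edge (einv e) by rewrite up_edge_einv up_e.
by move: imm_ep; rewrite /= (down_edge_uniq down_e' down_inv src_e') eqxx.
Qed.

Lemma down_path_height u w p :
  is_path u p w -> all (predC up_edge) p -> height u = height w + size p.
Proof.
elim: p u => [|e p IH] u /=; first by move/eqP => ->; rewrite addn0.
case/andP => /eqP <- path_p /andP [down_e down_p].
by rewrite (down_edge_height down_e) (IH _ path_p down_p) addnS.
Qed.

Lemma up_path_height u w p :
  is_path u p w -> all up_edge p -> height w = height u + size p.
Proof.
elim: p u => [|e p IH] u /=; first by move/eqP => ->; rewrite addn0.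
case/andP => /eqP <- path_p /andP [up_e up_p].
by rewrite (IH _ path_p up_p) (up_edge_height up_e) addSnnS.
Qed.

Lemma down_path_uniq u w w' p p' : is_path u p w -> is_path u p' w' ->
  all (predC up_edge) p -> all (predC up_edge) p' -> size p = size p' -> p = p'.
Proof.
elim: p p' u => [|e p IH] [|e' p'] u //= /andP [/eqP src_e path_p] /andP [/eqP src_e' path_p'].
case/andP=> down_e down_p /andP [down_e' down_p'] [eq_size].
have eq_e : e = e' by apply: down_edge_uniq => //=; rewrite src_e src_e'.
by subst e'; rewrite (IH _ _ path_p path_p').
Qed.

(* An immersed loop would go down and then up again, i.e. it would retrace its
   steps backwards, since every vertex has at most one down edge. *)
Lemma prefix_tree_loop (v : vert prefix_tree) p : is_path v p v -> immersed p -> p = [::].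
Proof.
move=> path_p imm_p; case: (immersed_path_split path_p imm_p) => pd [pu [def_p down_pd up_pu]].
move: path_p; rewrite def_p is_path_cat => /andP [path_pd path_pu].
have eq_size : size pd = size (winv tinv pu).
  apply/eqP; rewrite size_rev size_map -(eqn_add2l (height (pend v pd))).
  by rewrite -(down_path_height path_pd down_pd) -(up_path_height path_pu up_pu).
have down_winv : all (predC up_edge) (winv tinv pu).
  by rewrite all_rev all_map; apply/allP => e /(allP up_pu) up_e /=; rewrite up_edge_einv up_e.
have eq_pd := down_path_uniq path_pd (is_path_winv path_pu) down_pd down_winv eq_size.
case: pu {path_pu up_pu down_winv eq_size} def_p eq_pd => [|e pu] def_p eq_pd.
  by rewrite eq_pd.
move: imm_p; rewrite def_p eq_pd /winv /= rev_cons -cats1 -catA /= /immersed sorted_cat_cons.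
by case/andP => _ /= /andP []; rewrite prefix_einvK eqxx.
Qed.

(* The [None] branch is a junk value, never reached along a suffix of [c]. *)
Fixpoint lift (v : prefix_vert) (w : seq (edge S)) : seq prefix_edges :=
  if w is d :: w' then
    if insub (v, d) is Some e then e :: lift (edge_tgt e) w' else [::]
  else [::].

Definition root : prefix_vert := SeqSub (mem_prefix_stacks (erefl : c = [::] ++ c)).

Lemma lift_path u w (v : vert prefix_tree) : c = u ++ w -> ssval v = stack_of u ->
  is_path v (lift v w) root /\ map (me prefix_map) (lift v w) = w.
Proof.
elim: w u v => [|d w IH] u v def_c def_v /=.
  split=> //; apply/eqP/val_inj; rewrite /= def_v.
  by move: c_null; rewrite def_c cats0 => /(congr1 rev); rewrite revK.
have def_c' : c = rcons u d ++ w by rewrite cat_rcons.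
have e_vd : prefix_edge (v, d).
  rewrite /prefix_edge /= def_v -reduce_onto_rcons (mem_prefix_stacks def_c') /=.
  move: c_path; rewrite def_c is_path_cat /= (stack_end_of def_c) => /and3P [_ /eqP <- _].
  by rewrite eqxx.
rewrite insubT /=; case: (IH (rcons u d) (edge_tgt (Sub (v, d) e_vd : prefix_edges)) def_c').
  by rewrite /= def_v reduce_onto_rcons.
by move=> path_w ->; rewrite eqxx path_w.
Qed.

Lemma prefix_tree_connected : connected prefix_tree.
Proof.
have to_root (v : vert prefix_tree) : exists p, is_path v p root.
  case/prefix_stacksP: (ssvalP v) => u [w [def_c def_v]].
  by exists (lift v w); case: (lift_path def_c def_v).
move=> u w; case: (to_root u) => p path_p; case: (to_root w) => q path_q.
by exists (p ++ winv tinv q); apply: cat_is_path path_p (is_path_winv path_q).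
Qed.

Lemma prefix_tree_is_tree : is_tree prefix_tree.
Proof. by split; [apply: prefix_tree_connected | apply: prefix_tree_loop]. Qed.

Lemma null_path_lifts_to_tree :
  exists (T : lgraph B) (h : smorph T S) (r : vert T) (f : seq (edge T)),
    [/\ is_tree T, is_path r f r, map (me h) f = c & immersion h].
Proof.
exists prefix_tree, prefix_map, root, (lift root c).
have [path_f map_f] := lift_path (u := [::]) (erefl : c = [::] ++ c) (erefl : ssval root = _).
by split=> //; [apply: prefix_tree_is_tree | apply: prefix_map_immersion].
Qed.

End ReducedPrefixTree.


Section Folding.
Variables (B : finType) (S0 S1 : lgraph B) (g : smorph S0 S1) (b : B).
Local Notation G := (me g).
Local Notation inv1 := (@einv B S1).
Local Notation invK1 := (@einvK B S1).
Local Notation red1 := (reduce inv1).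
Local Notation b_edge := (fun z : edge S0 => (lab z).1 == b).

Lemma lab_me_einv (z z' : edge S0) : G z' = einv (G z) -> (lab z').1 = (lab z).1.
Proof. by move=> g_z'; rewrite -(me_lab g z') g_z' lab_einv me_lab. Qed.

Lemma lab_einv_me_einv (z z' : edge S0) : G z' = einv (G z) -> lab (einv z') = lab z.
Proof. by move=> g_z'; rewrite -(me_lab g) me_einv g_z' einvK me_lab. Qed.

Definition cancelling_pair (s : seq (edge S0)) x beta y :=
  [/\ exists a c, s = a ++ x :: beta ++ y :: c, (lab x).1 = b, G y = einv (G x)
    & red1 (map G beta) = [::]].

Lemma cancelling_pair_exists w : red1 (map G w) = [::] -> has b_edge w ->
  exists x beta y, cancelling_pair w x beta y.
Proof.
move=> + /hasP [z z_w /eqP lab_z]; case/splitPr: z_w => p r red_w.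
case: (reduce_nil_partner invK1 red_w (erefl _)).
  case=> p1 [z' [p2 [-> g_z' red_p2]]]; exists z', p2, z; split=> //.
  - by exists p1, r; rewrite -catA.
  - by rewrite (lab_me_einv g_z').
  - by rewrite g_z' einvK.
case=> r1 [z' [r2 [-> g_z' red_r1]]]; exists z, r1, z'; split=> //.
by exists p, r2.
Qed.

Lemma innermost_cancelling_pair s x beta y : cancelling_pair s x beta y ->
  exists x' beta' y', cancelling_pair s x' beta' y' /\ ~~ has b_edge beta'.
Proof.
move: {2}(size beta).+1 (ltnSn (size beta)) => n.
elim: n x beta y => // n IH x beta y lt_beta pair_xy.
have [has_b|] := boolP (has b_edge beta); last by exists x, beta, y.
case: (pair_xy) => [[a [c def_s]] _ _ red_beta].
case: (cancelling_pair_exists red_beta has_b)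
  => x' [beta' [y' [[a' [c' def_beta]] lab_x' g_y' red_beta']]].
apply: (IH x' beta' y').
  by move: lt_beta; rewrite def_beta size_cat /= size_cat /=; lia.
split=> //; exists (a ++ x :: a'), (c' ++ y :: c).
by rewrite def_s def_beta -!catA /= -!catA.
Qed.

Lemma b_collision : nb_edges S1 b < nb_edges S0 b ->
  exists e e', [/\ e != e', lab e = (b, true), lab e' = (b, true) & G e = G e'].
Proof.
move=> lt_nb; have [|e [e' [/eqP lab_e /eqP lab_e' neq_ee' g_ee']]] :=
  @pigeonhole_in _ _ G [pred e | lab e == (b, true)] [pred d | lab d == (b, true)] _ lt_nb.
  by move=> e; rewrite !inE me_lab.
by exists e, e'.
Qed.

Lemma null_image_path v0 u w : connected S0 -> pi1_surj g v0 -> mv g u = mv g w ->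
  exists q, is_path u q w /\ red1 (map G q) = [::].
Proof.
move=> conn surj g_uw.
case: (conn u v0) => delta path_delta; case: (conn v0 w) => eps path_eps.
have path_p : is_path (mv g v0) (winv inv1 (map G delta) ++ winv inv1 (map G eps)) (mv g v0).
  apply: (cat_is_path (v := mv g u)); apply: is_path_winv; last rewrite g_uw; exact: is_path_map.
case: (surj _ path_p) => l [path_l /reduce_homotopic red_l].
exists (delta ++ l ++ eps); split.
  exact: cat_is_path path_delta (cat_is_path path_l path_eps).
rewrite !map_cat (reduce_mid invK1 _ _ red_l).
have -> : forall a b c d : seq (edge S1), a ++ (b ++ c) ++ d = [::] ++ (a ++ b) ++ (c ++ d).
  by move=> *; rewrite -!catA.
by rewrite (reduce_mid invK1 _ _ (m' := [::])) ?(reduce_cat_winv invK1) //= (reduce_winv_cat invK1).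
Qed.

Lemma immersed_null_path e e' q :
  e != e' -> lab e = (b, true) -> lab e' = (b, true) -> G e = G e' ->
  is_path (src e) q (src e') -> red1 (map G q) = [::] ->
  exists s u w, [/\ is_path u s w, immersed s, red1 (map G s) = [::] & has b_edge s].
Proof.
move=> neq_ee' lab_e lab_e' g_ee' path_q red_q.
pose R := reduce (@einv B S0) q.
have path_R : is_path (src e) R (src e') := is_path_reduce path_q.
have imm_R : immersed R := reduced_reduce (@einvK B S0) q.
have red_R : red1 (map G R) = [::].
  by rewrite (reduce_map_reduce invK1 (me_einv g)).
have [has_b|no_b] := boolP (has b_edge R); first by exists R, (src e), (src e').
(* Without b-edges on R, the detour e^-1 R e' cannot backtrack. *)
have not_b (z : edge S0) : z \in R -> (lab z).1 != b by move=> z_R; apply: (hasPn no_b).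
exists (einv e :: R ++ [:: e']), (tgt e), (tgt e'); split.
- rewrite /= eqxx tgt_einv; apply: cat_is_path path_R _; by rewrite /= !eqxx.
- rewrite /immersed /= cat_path /= andbT; apply/andP; split.
    case: R imm_R not_b {path_R red_R no_b} => [|r R] //= -> not_b; rewrite andbT einvK.
    by apply: contraNneq (not_b r (mem_head _ _)) => ->; rewrite lab_e.
  case: (lastP R) not_b => [_|R' r not_b] /=; first by rewrite einvK eq_sym.
  rewrite last_rcons; apply: contraNneq (not_b r _) => [eq_e'|]; last by rewrite mem_rcons mem_head.
  by move: lab_e'; rewrite eq_e' lab_einv => -[->].
- rewrite /= map_cat -cat1s (@reduce_mid _ _ invK1 [:: G (einv e)] _ [::] [:: G e'] red_R) /=.
  by rewrite me_einv g_ee' (reduce_winv_cat invK1 [:: G e']).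
- by rewrite /= lab_einv lab_e eqxx.
Qed.

Lemma cancelling_pair_path s u w x beta y :
  is_path u s w -> immersed s -> cancelling_pair s x beta y ->
  exists u' w', [/\ is_path u' (x :: beta ++ [:: y]) w', immersed (x :: beta ++ [:: y])
                   & red1 (map G (x :: beta ++ [:: y])) = [::]].
Proof.
move=> path_s imm_s [[a [c def_s]] _ g_y red_beta].
have def_s' : s = a ++ (x :: beta ++ [:: y]) ++ c by rewrite def_s /= -catA.
have [u' [w' path_sigma]] : exists u' w', is_path u' (x :: beta ++ [:: y]) w'.
  by apply: (is_path_infix (u := u) (w := w) (a := a) (c := c)); rewrite -def_s'.
exists u', w'; split=> //; first by apply: infix_sorted imm_s; rewrite def_s' infix_infix.
rewrite /= map_cat -cat1s (@reduce_mid _ _ invK1 [:: G x] _ [::] _ red_beta) /= g_y.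
exact: (reduce_cat_winv invK1 [:: G x]).
Qed.

Lemma exists_folding_path v0 :
  connected S0 -> pi1_surj g v0 -> nb_edges S1 b < nb_edges S0 b ->
  exists x beta y u w,
    [/\ is_path u (x :: beta ++ [:: y]) w, immersed (x :: beta ++ [:: y]),
        red1 (map G (x :: beta ++ [:: y])) = [::], (lab x).1 = b & G y = einv (G x)]
    /\ ~~ has b_edge beta.
Proof.
move=> conn surj /b_collision [e [e' [neq_ee' lab_e lab_e' g_ee']]].
have g_src : mv g (src e) = mv g (src e') by rewrite -!me_src g_ee'.
case: (null_image_path conn surj g_src) => q [path_q red_q].
case: (immersed_null_path neq_ee' lab_e lab_e' g_ee' path_q red_q)
  => s [u [w [path_s imm_s red_s has_b]]].
case: (cancelling_pair_exists red_s has_b) => x [beta [y /innermost_cancelling_pair]].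
case=> x' [beta' [y' [pair' no_b]]]; case: (pair') => _ lab_x' g_y' _.
have [u' [w' [path_sigma imm_sigma red_sigma]]] := cancelling_pair_path path_s imm_s pair'.
by exists x', beta', y', u', w'.
Qed.

End Folding.

Theorem lemma9p6 (B : finType) (S0 S1 : lgraph B) (g : smorph S0 S1)
    (v0 : vert S0) (b : B) :
  connected S0 -> connected S1 -> pi1_surj g v0 ->
  nb_edges S1 b < nb_edges S0 b ->
  exists (sigma : seq (edge S0)) (e0 : edge S0)
         (T : lgraph B) (f : seq (edge T)) (f0 : edge T) (h : smorph T S1),
    let m := (size sigma).-1 in
    0 < size sigma /\
    (exists u w, is_path u sigma w) /\ immersed sigma /\
    is_tree T /\
    (exists u w, is_path u f w) /\ map (@lab B T) f = map (@lab B S0) sigma /\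
    map (me h) f = map (me g) sigma /\
    nth f0 f 0 = einv (nth f0 f m) /\
    lab (nth e0 sigma 0) = lab (einv (nth e0 sigma m)) /\
    (lab (nth e0 sigma 0)).1 = b /\
    (forall i, 0 < i < m -> (lab (nth e0 sigma i)).1 != b).
Proof.
move=> conn0 _ surj lt_nb.
have [x [beta [y [u [w [[path_s imm_s red_s lab_x g_y] no_b]]]]]] :=
  exists_folding_path conn0 surj lt_nb.
have [T [h [r [[|f0 f] [tree_T path_f map_f imm_h]]]]] :=
  null_path_lifts_to_tree (is_path_map g path_s) red_s; first by [].
have fold_f : f0 = einv (last f0 f).
  apply: (immersion_fold imm_h path_f); rewrite -last_map; case: map_f => -> ->.
  by rewrite map_cat last_cat /= g_y.
exists (x :: beta ++ [:: y]), x, T, (f0 :: f), f0, h => m.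
have size_f : size (f0 :: f) = size (x :: beta ++ [:: y]).
  by rewrite -(size_map (me h)) map_f size_map.
split; first by [].
split; first by exists u, w.
do 2 (split; first by []).
split; first by exists r, r.
split; first by rewrite -(map_lab_me h) map_f map_lab_me.
split; first by [].
split; first by rewrite /m -size_f nth_last.
split; first by rewrite /m nth_last /= last_cat (lab_einv_me_einv g_y).
split; first by [].
by move=> i /mem_nth_interior /(hasPn no_b).
Qed.
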